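(* Let $\mathcal Z_{\mathcal S}=(X,(\phi_j)_{j=0}^{n-1},(\rho_j)_{j=0}^{n-1})$ be a Matkowski contractive GIFZS of degree $m$ on a metric space $X$, and let $\varphi_j$ be a witness for $\phi_j$, $j=0,\dots,n-1$. Then the operator $\mathcal Z_{\mathcal S}:(\mathcal F_X^* )^m\to\mathcal F_X^*$ is a generalized Matkowski contraction (with respect to $d_\infty^m$ and $d_\infty$) with witness $\varphi=\max_j\varphi_j$, i.e. $d_\infty(\mathcal Z_{\mathcal S}(u_0,\dots,u_{m-1}),\mathcal Z_{\mathcal S}(v_0,\dots,v_{m-1}))\le\varphi(\max_i d_\infty(u_i,v_i))$. In particular, if $\mathcal Z_{\mathcal S}$ is Lipschitz contractive, then the operator $\mathcal Z_{\mathcal S}$ is Lipschitz with constant at most $\max_j\mathrm{Lip}(\phi_j)<1$.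
   Context: A fuzzy subset of $X$ is $u:X\to[0,1]$. For $\alpha\in(0,1]$, $[u]^\alpha=\{x:u(x)\ge\alpha\}$, $[u]^0=\overline{\{x:u(x)>0\}}$. $\mathcal F_X^*$: fuzzy subsets that are normal ($u(x)=1$ for some $x$), usc, compactly supported ($[u]^0$ compact). $h$: Hausdorff metric; $d_\infty(u,v)=\sup_{\alpha\in[0,1]}h([u]^\alpha,[v]^\alpha)$; $d_\infty^m((u_i),(v_i))=\max_i d_\infty(u_i,v_i)$. $X^m$ carries the maximum metric $d^m$. For $T:Z\to Y$, $T(u)(y)=\sup\{u(z):T(z)=y\}$ if $y\in T(Z)$, else $0$; $\rho(u)=\rho\circ u$; $(u_0\times\cdots\times u_{m-1})(x_0,\dots,x_{m-1})=\min_iu_i(x_i)$; $\vee$ is pointwise max. A grey level map is a non-identically-zero $\rho:[0,1]\to[0,1]$; a family $(\rho_j)_{j=0}^{n-1}$ is admissible if each $\rho_j$ is nondecreasing and right continuous, $\rho_j(0)=0$ for all $j$, and $\rho_j(1)=1$ for some $j$. A map $f:M^m\to M$ (or between metric spaces) is a generalized Matkowski contraction if there is a nondecreasing $\varphi:[0,\infty)\to[0,\infty)$ with $\varphi^{(k)}(t)\to0$ for every $t>0$ ($k$-th iterate) such that $d(f(x),f(y))\le\varphi(d^m(x,y))$; $\varphi$ is a witness. A GIFS of degree $m$ is $\mathcal S=(X,(\phi_j)_{j=0}^{n-1})$ with continuous $\phi_j:X^m\to X$; a GIFZS of degree $m$ is $(X,(\phi_j),(\rho_j))$ with $(X,(\phi_j))$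 a GIFS of degree $m$ and $(\rho_j)$ admissible; it is Matkowski (resp. Lipschitz) contractive if every $\phi_j$ is a generalized Matkowski contraction (resp. $\mathrm{Lip}(\phi_j)<1$). Its operator is $\mathcal Z_{\mathcal S}(u_0,\dots,u_{m-1})=\bigvee_j\rho_j(\phi_j(u_0\times\cdots\times u_{m-1}))$. *)

From Stdlib Require Import Reals Lra Lia Classical ClassicalEpsilon List.
Open Scope R_scope.

(** Generic supremum / infimum of a set of reals (least upper bound when it
    exists, chosen by classical choice; only used on nonempty bounded sets). *)
Definition Rsup (E : R -> Prop) : R := epsilon (inhabits 0) (fun l => is_lub E l).
Definition Rinf (E : R -> Prop) : R := - Rsup (fun x => E (- x)).

(** Finite index set {0,...,m-1}; X^m is [idx m -> X]. *)
Definition idx (m : nat) : Type := {i : nat | (i < m)%nat}.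

Definition ext {A : Type} (m : nat) (dflt : A) (g : idx m -> A) (i : nat) : A :=
  match Compare_dec.lt_dec i m with
  | left H => g (exist _ i H)
  | right _ => dflt
  end.

Fixpoint foldmin (k : nat) (g : nat -> R) : R :=
  match k with O => 1 | S k' => Rmin (foldmin k' g) (g k') end.
Fixpoint foldmax (k : nat) (g : nat -> R) : R :=
  match k with O => 0 | S k' => Rmax (foldmax k' g) (g k') end.

(** min_{i<m} g i (values in [0,1], empty min = 1) and
    max_{i<m} g i (nonnegative values, empty max = 0). *)
Definition fmin (m : nat) (g : idx m -> R) : R := foldmin m (ext m 1 g).
Definition fmax (m : nat) (g : idx m -> R) : R := foldmax m (ext m 0 g).

Definition dm (M : Metric_Space) (m : nat) (x y : idx m -> Base M) : R :=
  fmax m (fun i => dist M (x i) (y i)).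

Definition is_open (M : Metric_Space) (U : Base M -> Prop) : Prop :=
  forall x, U x -> exists r, 0 < r /\ forall y, dist M x y < r -> U y.

Definition is_compact (M : Metric_Space) (K : Base M -> Prop) : Prop :=
  forall (I : Type) (U : I -> Base M -> Prop),
    (forall i, is_open M (U i)) ->
    (forall x, K x -> exists i, U i x) ->
    exists l : list I, forall x, K x -> exists i, In i l /\ U i x.

Definition closure (M : Metric_Space) (S : Base M -> Prop) : Base M -> Prop :=
  fun x => forall eps, 0 < eps -> exists y, S y /\ dist M x y < eps.

Definition dist_to (M : Metric_Space) (a : Base M) (B : Base M -> Prop) : R :=
  Rinf (fun r => exists b, B b /\ r = dist M a b).

Definition hausdorff (M : Metric_Space) (A B : Base M -> Prop) : R :=
  Rmax (Rsup (fun r => exists a, A a /\ r = dist_to M a B))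
       (Rsup (fun r => exists b, B b /\ r = dist_to M b A)).

Definition fuzzy {X : Type} (u : X -> R) : Prop := forall x, 0 <= u x <= 1.

Definition level (M : Metric_Space) (u : Base M -> R) (a : R) : Base M -> Prop :=
  fun x => if Rlt_dec 0 a then a <= u x else closure M (fun y => 0 < u y) x.

Definition usc (M : Metric_Space) (u : Base M -> R) : Prop :=
  forall x eps, 0 < eps ->
    exists delta, 0 < delta /\ forall y, dist M x y < delta -> u y < u x + eps.

Definition Fstar (M : Metric_Space) (u : Base M -> R) : Prop :=
  fuzzy u /\ (exists x, u x = 1) /\ usc M u /\ is_compact M (level M u 0).

Definition d_inf (M : Metric_Space) (u v : Base M -> R) : R :=
  Rsup (fun r => exists a, 0 <= a <= 1 /\ r = hausdorff M (level M u a) (level M v a)).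

Definition d_inf_m (M : Metric_Space) (m : nat) (u v : idx m -> Base M -> R) : R :=
  fmax m (fun i => d_inf M (u i) (v i)).

Definition zadeh {Z Y : Type} (T : Z -> Y) (u : Z -> R) : Y -> R :=
  fun y =>
    match excluded_middle_informative (exists z, T z = y) with
    | left _ => Rsup (fun r => exists z, T z = y /\ r = u z)
    | right _ => 0
    end.

Definition fprod {X : Type} (m : nat) (u : idx m -> X -> R) : (idx m -> X) -> R :=
  fun x => fmin m (fun i => u i (x i)).

Definition grey_level_map (rho : R -> R) : Prop :=
  (forall t, 0 <= t <= 1 -> 0 <= rho t <= 1) /\
  (exists t, 0 <= t <= 1 /\ rho t <> 0).

Definition admissible (n : nat) (rho : idx n -> R -> R) : Prop :=
  (forall j, grey_level_map (rho j)) /\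
  (forall j s t, 0 <= s <= t -> t <= 1 -> rho j s <= rho j t) /\
  (forall j t, 0 <= t < 1 -> forall eps, 0 < eps -> exists delta, 0 < delta /\
      forall s, t <= s < t + delta -> s <= 1 -> Rabs (rho j s - rho j t) < eps) /\
  (forall j, rho j 0 = 0) /\
  (exists j, rho j 1 = 1).

Definition matkowski_witness (phi : R -> R) : Prop :=
  (forall t, 0 <= t -> 0 <= phi t) /\
  (forall s t, 0 <= s <= t -> phi s <= phi t) /\
  (forall t, 0 < t -> Un_cv (fun k => Nat.iter k phi t) 0).

Definition gen_matkowski {A B : Type} (dA : A -> A -> R) (dB : B -> B -> R)
  (f : A -> B) (phi : R -> R) : Prop :=
  matkowski_witness phi /\ forall x y, dB (f x) (f y) <= phi (dA x y).

Definition continuous_m (M : Metric_Space) (m : nat) (f : (idx m -> Base M) -> Base M) : Prop :=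
  forall x eps, 0 < eps -> exists delta, 0 < delta /\
    forall y, dm M m x y < delta -> dist M (f x) (f y) < eps.

Definition Zop (M : Metric_Space) (m n : nat)
  (phi : idx n -> (idx m -> Base M) -> Base M) (rho : idx n -> R -> R)
  (u : idx m -> Base M -> R) : Base M -> R :=
  fun x => fmax n (fun j => rho j (zadeh (phi j) (fprod m u) x)).

From Stdlib Require Import Reals Lra Lia Classical ClassicalEpsilon List.
Open Scope R_scope.

(* A positive level [Z_S(u)]^a consists of points phi_j(w) with rho_j(min_i u_i(w_i)) >= a:
   the supremum defining the Zadeh extension is attained, because the supports of the u_i
   are compact, phi_j is continuous and the u_i are upper semicontinuous.  Replacing each
   w_i by a point of the same level of v_i at distance <= d_inf(u_i, v_i) moves phi_j(w)
   by at most varphi_j(max_i d_inf(u_i, v_i)) and lands in [Z_S(v)]^a; so each level of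
   Z_S(u) lies in the corresponding neighbourhood of the level of Z_S(v) and conversely,
   which bounds the Hausdorff distances level by level.  The same compactness arguments
   show that Z_S(u) is again in F*, and the maximum of finitely many Matkowski witnesses
   is again a witness. *)

Lemma Rsup_is_lub (E : R -> Prop) :
  (exists x, E x) -> (exists b, forall x, E x -> x <= b) -> is_lub E (Rsup E).
Proof.
  intros Hne [b Hb]. unfold Rsup. apply epsilon_spec.
  destruct (completeness E) as [l Hl]; [exists b; exact Hb | exact Hne | exists l; exact Hl].
Qed.

Lemma Rsup_least (E : R -> Prop) c :
  (exists x, E x) -> (forall x, E x -> x <= c) -> Rsup E <= c.
Proof.
  intros Hne Hc. destruct (Rsup_is_lub E Hne (ex_intro _ c Hc)) as [_ H]. exact (H c Hc).
Qed.

Lemma Rsup_upper (E : R -> Prop) x :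
  (exists b, forall y, E y -> y <= b) -> E x -> x <= Rsup E.
Proof.
  intros Hb Hx. destruct (Rsup_is_lub E (ex_intro _ x Hx) Hb) as [H _]. exact (H x Hx).
Qed.

Lemma Rsup_approx (E : R -> Prop) eps :
  (exists x, E x) -> (exists b, forall x, E x -> x <= b) -> 0 < eps ->
  exists x, E x /\ Rsup E - eps < x.
Proof.
  intros Hne Hb He. destruct (Rsup_is_lub E Hne Hb) as [_ Hleast].
  apply NNPP. intro Hn.
  enough (Rsup E <= Rsup E - eps) by lra.
  apply Hleast. intros x Hx. apply Rnot_lt_le. intro Hlt. apply Hn. now exists x.
Qed.

Lemma Rinf_lower (E : R -> Prop) b x :
  (forall y, E y -> b <= y) -> E x -> Rinf E <= x.
Proof.
  intros Hb Hx. unfold Rinf.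
  enough (- x <= Rsup (fun y => E (- y))) by lra.
  apply Rsup_upper.
  - exists (- b). intros y Hy. specialize (Hb _ Hy). lra.
  - now rewrite Ropp_involutive.
Qed.

Lemma Rinf_approx (E : R -> Prop) b eps :
  (exists x, E x) -> (forall y, E y -> b <= y) -> 0 < eps ->
  exists x, E x /\ x < Rinf E + eps.
Proof.
  intros [x0 Hx0] Hb He. unfold Rinf.
  destruct (Rsup_approx (fun y => E (- y)) eps) as [y [Hy Hlt]].
  - exists (- x0). now rewrite Ropp_involutive.
  - exists (- b). intros y Hy. specialize (Hb _ Hy). lra.
  - exact He.
  - exists (- y). split; [exact Hy | lra].
Qed.

Lemma foldmax_ge0 k g : 0 <= foldmax k g.
Proof. induction k; simpl; [lra | eapply Rle_trans; [exact IHk | apply Rmax_l]]. Qed.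

Lemma foldmax_le k g c :
  0 <= c -> (forall i, (i < k)%nat -> g i <= c) -> foldmax k g <= c.
Proof.
  intros Hc; induction k; simpl; intros H; [exact Hc |].
  apply Rmax_lub; [apply IHk; intros; apply H |  apply H]; lia.
Qed.

Lemma foldmax_lt k g c :
  0 < c -> (forall i, (i < k)%nat -> g i < c) -> foldmax k g < c.
Proof.
  intros Hc; induction k; simpl; intros H; [exact Hc |].
  apply Rmax_lub_lt; [apply IHk; intros; apply H | apply H]; lia.
Qed.

Lemma foldmax_ub k g i : (i < k)%nat -> g i <= foldmax k g.
Proof.
  induction k; simpl; intros H; [lia |].
  destruct (Nat.eq_dec i k) as [-> | Hne]; [apply Rmax_r |].
  eapply Rle_trans; [apply IHk; lia | apply Rmax_l].
Qed.

Lemma foldmax_attained k g a :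
  0 < a -> a <= foldmax k g -> exists i, (i < k)%nat /\ a <= g i.
Proof.
  induction k; simpl; intros Ha H; [lra |].
  destruct (Rle_dec a (foldmax k g)) as [Hle | Hnle].
  - destruct (IHk Ha Hle) as [i [Hi Hg]]. exists i. split; [lia | exact Hg].
  - exists k. split; [lia |]. unfold Rmax in H. destruct (Rle_dec (foldmax k g) (g k)); lra.
Qed.

Lemma foldmax_mono k g h :
  (forall i, (i < k)%nat -> g i <= h i) -> foldmax k g <= foldmax k h.
Proof.
  induction k; simpl; intros H; [lra |].
  apply Rmax_lub.
  - eapply Rle_trans; [apply IHk; intros; apply H; lia | apply Rmax_l].
  - eapply Rle_trans; [apply H; lia | apply Rmax_r].
Qed.

Lemma foldmax_mult_r k g D :
  0 <= D -> foldmax k (fun i => g i * D) = foldmax k g * D.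
Proof.
  intros HD; induction k; simpl; [ring |]. rewrite IHk.
  destruct (Rle_dec (foldmax k g) (g k)) as [Hle | Hnle].
  - rewrite (Rmax_right _ _ Hle), Rmax_right; [reflexivity |].
    apply Rmult_le_compat_r; assumption.
  - rewrite (Rmax_left (foldmax k g)), Rmax_left; [reflexivity | |lra].
    apply Rmult_le_compat_r; lra.
Qed.

Lemma foldmax_ext k g h :
  (forall i, (i < k)%nat -> g i = h i) -> foldmax k g = foldmax k h.
Proof. induction k; simpl; intros H; [reflexivity |]. rewrite IHk, H; auto. Qed.

Lemma foldmin_ge k g c :
  c <= 1 -> (forall i, (i < k)%nat -> c <= g i) -> c <= foldmin k g.
Proof.
  intros Hc; induction k; simpl; intros H; [exact Hc |].
  apply Rmin_glb; [apply IHk; intros; apply H | apply H]; lia.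
Qed.

Lemma foldmin_lb k g i : (i < k)%nat -> foldmin k g <= g i.
Proof.
  induction k; simpl; intros H; [lia |].
  destruct (Nat.eq_dec i k) as [-> | Hne]; [apply Rmin_r |].
  eapply Rle_trans; [apply Rmin_l | apply IHk; lia].
Qed.

Lemma foldmin_le1 k g : foldmin k g <= 1.
Proof. induction k; simpl; [lra | eapply Rle_trans; [apply Rmin_l | exact IHk]]. Qed.

Lemma foldmin_lt_add k g g' eps :
  (forall i, (i < k)%nat -> g' i < g i + eps) -> 0 < eps ->
  foldmin k g' < foldmin k g + eps.
Proof.
  induction k; simpl; intros H He; [lra |].
  assert (IH : foldmin k g' < foldmin k g + eps) by (apply IHk; auto).
  assert (Hk : g' k < g k + eps) by (apply H; lia).
  unfold Rmin. destruct (Rle_dec (foldmin k g') (g' k)), (Rle_dec (foldmin k g) (g k)); lra.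
Qed.

Lemma idx_eq m (i j : idx m) : proj1_sig i = proj1_sig j -> i = j.
Proof.
  destruct i as [i Hi], j as [j Hj]; simpl; intros ->. f_equal. apply Peano_dec.le_unique.
Qed.

Lemma ext_lt {A} m (d : A) g i (H : (i < m)%nat) : ext m d g i = g (exist _ i H).
Proof.
  unfold ext. destruct (Compare_dec.lt_dec i m) as [H' | Hn]; [| contradiction].
  f_equal. now apply idx_eq.
Qed.

Lemma fmax_ge0 m g : 0 <= fmax m g.
Proof. apply foldmax_ge0. Qed.

Lemma fmax_le m g c : 0 <= c -> (forall j, g j <= c) -> fmax m g <= c.
Proof. intros Hc H. apply foldmax_le; auto. intros i Hi. rewrite (ext_lt _ _ _ _ Hi). apply H. Qed.

Lemma fmax_lt m g c : 0 < c -> (forall j, g j < c) -> fmax m g < c.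
Proof. intros Hc H. apply foldmax_lt; auto. intros i Hi. rewrite (ext_lt _ _ _ _ Hi). apply H. Qed.

Lemma fmax_ub m g j : g j <= fmax m g.
Proof.
  destruct j as [i Hi]. unfold fmax. rewrite <- (ext_lt m 0 g i Hi). now apply foldmax_ub.
Qed.

Lemma fmax_attained m g a : 0 < a -> a <= fmax m g -> exists j, a <= g j.
Proof.
  intros Ha H. destruct (foldmax_attained _ _ _ Ha H) as [i [Hi Hg]].
  rewrite (ext_lt _ _ _ _ Hi) in Hg. eauto.
Qed.

Lemma fmax_mono m g h : (forall j, g j <= h j) -> fmax m g <= fmax m h.
Proof.
  intros H. apply foldmax_mono. intros i Hi. rewrite !(ext_lt _ _ _ _ Hi). apply H.
Qed.

Lemma fmax_mult_r m g D : 0 <= D -> fmax m (fun j => g j * D) = fmax m g * D.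
Proof.
  intros HD. unfold fmax. rewrite <- foldmax_mult_r by exact HD. apply foldmax_ext.
  intros i Hi. rewrite !(ext_lt _ _ _ _ Hi). reflexivity.
Qed.

Lemma fmin_ge m g c : c <= 1 -> (forall j, c <= g j) -> c <= fmin m g.
Proof. intros Hc H. apply foldmin_ge; auto. intros i Hi. rewrite (ext_lt _ _ _ _ Hi). apply H. Qed.

Lemma fmin_lb m g j : fmin m g <= g j.
Proof.
  destruct j as [i Hi]. unfold fmin. rewrite <- (ext_lt m 1 g i Hi). now apply foldmin_lb.
Qed.

Lemma fmin_le1 m g : fmin m g <= 1.
Proof. apply foldmin_le1. Qed.

Lemma fmin_lt_add m g g' eps :
  (forall j, g' j < g j + eps) -> 0 < eps -> fmin m g' < fmin m g + eps.
Proof.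
  intros H He. apply foldmin_lt_add; auto. intros i Hi. rewrite !(ext_lt _ _ _ _ Hi). apply H.
Qed.

Lemma idx_eventually_all m (P : idx m -> nat -> Prop) :
  (forall i N N', (N <= N')%nat -> P i N -> P i N') ->
  (forall i, exists N, P i N) -> exists N, forall i, P i N.
Proof.
  intros Hmono Hex.
  assert (Hk : forall k, exists N, forall i, (proj1_sig i < k)%nat -> P i N).
  { induction k as [| k [N HN]].
    - exists 0%nat. intros i Hi. lia.
    - destruct (Compare_dec.lt_dec k m) as [Hk | Hk].
      + destruct (Hex (exist _ k Hk)) as [Nk HNk].
        exists (Nat.max N Nk). intros i Hi.
        destruct (Nat.eq_dec (proj1_sig i) k) as [E | E].
        * apply Hmono with Nk; [lia |]. now rewrite (idx_eq _ i (exist _ k Hk) E).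
        * apply Hmono with N; [lia |]. apply HN. lia.
      + exists N. intros i Hi. apply HN. destruct i; simpl in *; lia. }
  destruct (Hk m) as [N HN]. exists N. intro i. apply HN. now destruct i.
Qed.

Lemma small_inv eps : 0 < eps -> exists N, forall k, (N <= k)%nat -> / INR (S k) < eps.
Proof.
  intros He. destruct (archimed_cor1 eps He) as [N [HN HN0]].
  exists N. intros k Hk. eapply Rle_lt_trans; [| exact HN].
  apply Rinv_le_contravar; [apply lt_0_INR; exact HN0 | apply le_INR; lia].
Qed.

Lemma inv_pos k : 0 < / INR (S k).
Proof. apply Rinv_0_lt_compat, lt_0_INR. lia. Qed.

Lemma idx_radius_all m (P : idx m -> R -> Prop) c :
  (forall i s s', c < s' <= s -> P i s -> P i s') ->
  (forall i, exists s, c < s /\ P i s) -> exists s, c < s /\ forall i, P i s.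
Proof.
  intros Hmono Hex.
  destruct (idx_eventually_all m (fun i N => P i (c + / INR (S N)))) as [N HN].
  - intros i N N' HNN' HP. apply Hmono with (c + / INR (S N)); [| exact HP].
    pose proof (inv_pos N'). enough (/ INR (S N') <= / INR (S N)) by lra.
    apply Rinv_le_contravar; [apply lt_0_INR; lia | apply le_INR; lia].
  - intro i. destruct (Hex i) as [s [Hs HPs]].
    destruct (small_inv (s - c)) as [N HN]; [lra |].
    exists N. apply Hmono with s; [| exact HPs]. specialize (HN N (le_n N)). pose proof (inv_pos N). lra.
  - exists (c + / INR (S N)). split; [pose proof (inv_pos N); lra | exact HN].
Qed.

Lemma idx_pigeonhole n (J : nat -> idx n) :
  exists j, forall N, exists k, (N <= k)%nat /\ J k = j.
Proof.
  apply NNPP. intro Hn.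
  destruct (idx_eventually_all n (fun j N => forall k, (N <= k)%nat -> J k <> j)) as [N HN].
  - intros j N N' HNN' HP k Hk. apply HP. lia.
  - intro j. apply NNPP. intro Hn2. apply Hn. exists j. intro N.
    apply NNPP. intro Hn3. apply Hn2. exists N. intros k Hk E. apply Hn3. eauto.
  - exact (HN (J N) N (le_n N) eq_refl).
Qed.

(** * Matkowski witnesses *)

Lemma witness_lt phi : matkowski_witness phi -> forall s, 0 < s -> phi s < s.
Proof.
  intros [_ [Hmono Hcv]] s Hs. apply Rnot_le_lt. intro Hle.
  assert (Hk : forall k, s <= Nat.iter k phi s).
  { induction k; simpl; [lra |]. eapply Rle_trans; [exact Hle | apply Hmono; lra]. }
  destruct (Hcv s Hs s Hs) as [N HN]. specialize (HN N (le_n N)). specialize (Hk N).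
  unfold Rdist in HN. rewrite Rminus_0_r, Rabs_right in HN; lra.
Qed.

Lemma witness_le phi : matkowski_witness phi -> forall s, 0 <= s -> phi s <= s.
Proof.
  intros Hw s [Hs | <-]; [left; now apply witness_lt |].
  pose proof Hw as [Hpos [Hmono _]].
  destruct (Hpos 0 (Rle_refl 0)) as [H0 | H0]; [| lra].
  pose proof (witness_lt phi Hw _ H0). assert (phi 0 <= phi (phi 0)) by (apply Hmono; lra). lra.
Qed.

Lemma witness_no_invariant_ray phi c t :
  matkowski_witness phi -> 0 < c -> c < t -> ~ (forall s, c < s -> c < phi s).
Proof.
  intros [_ [_ Hcv]] Hc Ht Hinv.
  assert (Hk : forall k, c < Nat.iter k phi t) by (induction k; simpl; auto).
  destruct (Hcv t ltac:(lra) c Hc) as [N HN].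
  specialize (HN N (le_n N)). specialize (Hk N). unfold Rdist in HN.
  rewrite Rminus_0_r, Rabs_right in HN; lra.
Qed.

(* The iterates of the maximum decrease to some c; if c > 0, then each phi_j sends
   some s_j > c to [0, c], so the maximum sends the iterates below min_j s_j to [0, c]. *)
Lemma witness_fmax n (ph : idx n -> R -> R) :
  (forall j, matkowski_witness (ph j)) -> matkowski_witness (fun t => fmax n (fun j => ph j t)).
Proof.
  intros Hw. set (psi := fun t => fmax n (fun j => ph j t)).
  assert (Hmono : forall s t, 0 <= s <= t -> psi s <= psi t).
  { intros s t Hst. apply fmax_mono. intro j. now apply (Hw j). }
  assert (Hlt : forall s, 0 < s -> psi s < s).
  { intros s Hs. apply fmax_lt; auto. intro j. now apply witness_lt. }
  assert (Hle : forall s, 0 <= s -> psi s <= s).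
  { intros s Hs. apply fmax_le; auto. intro j. now apply witness_le. }
  split; [intros; apply fmax_ge0 | split; [exact Hmono |]].
  intros t Ht. set (s := fun k => Nat.iter k psi t).
  assert (Hs0 : forall k, 0 <= s k) by (intros [| k]; simpl; [lra | apply fmax_ge0]).
  assert (Hdecr : Un_decreasing s) by (intro k; apply Hle, Hs0).
  destruct (decreasing_cv s Hdecr) as [c Hc].
  { exists 0. intros x [k ->]. unfold opp_seq. pose proof (Hs0 k). lra. }
  assert (Hcs : forall k, c <= s k) by (apply decreasing_ineq; assumption).
  assert (Hc0 : 0 <= c).
  { apply Rnot_lt_le. intro Hneg. destruct (Hc (- c)) as [N HN]; [lra |].
    specialize (HN N (le_n N)). pose proof (Hs0 N). unfold Rdist in HN.
    rewrite Rabs_right in HN; lra. }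
  destruct (Rle_lt_or_eq_dec 0 c Hc0) as [Hcpos | <-]; [exfalso | exact Hc].
  assert (Hcs_lt : forall k, c < s k).
  { intro k. apply Rle_lt_trans with (s (S k)); [apply Hcs |]. apply Hlt. pose proof (Hcs k). lra. }
  assert (Hdrop : forall j, exists s', c < s' /\ ph j s' <= c).
  { intro j. apply NNPP. intro Hn.
    apply (witness_no_invariant_ray (ph j) c (s 0%nat) (Hw j)); [exact Hcpos | apply Hcs_lt |].
    intros s' Hs'. apply Rnot_le_lt. intro. apply Hn. eauto. }
  destruct (idx_radius_all n (fun j s' => ph j s' <= c) c) as [s' [Hs' Hall]].
  { intros j a b Hab Ha. eapply Rle_trans; [| exact Ha]. apply (Hw j). lra. }
  { exact Hdrop. }
  destruct (Hc (s' - c)) as [N HN]; [lra |]. specialize (HN N (le_n N)).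
  unfold Rdist in HN. rewrite Rabs_right in HN by (pose proof (Hcs N); lra).
  assert (Hnext : psi (s N) <= c).
  { apply fmax_le; [lra |]. intro j. eapply Rle_trans; [| apply (Hall j)].
    apply (Hw j). pose proof (Hs0 N). lra. }
  specialize (Hcs_lt (S N)). simpl in Hcs_lt. fold (s N) in Hcs_lt. lra.
Qed.

(** * Sequences and compactness in a metric space *)

Definition seq_lim (M : Metric_Space) (x : nat -> Base M) (p : Base M) : Prop :=
  forall eps, 0 < eps -> exists N, forall k, (N <= k)%nat -> dist M p (x k) < eps.

Definition strictly_increasing (s : nat -> nat) : Prop := forall k, (s k < s (S k))%nat.

Definition seq_compact (M : Metric_Space) (K : Base M -> Prop) : Prop :=
  forall x : nat -> Base M, (forall k, K (x k)) ->
  exists s p, strictly_increasing s /\ K p /\ seq_lim M (fun k => x (s k)) p.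

Lemma strictly_increasing_lt s :
  strictly_increasing s -> forall a b, (a < b)%nat -> (s a < s b)%nat.
Proof. intros H a b Hab. induction Hab; [apply H | specialize (H m); lia]. Qed.

Lemma strictly_increasing_ge s : strictly_increasing s -> forall k, (k <= s k)%nat.
Proof. intros H k. induction k; [lia | specialize (H k); lia]. Qed.

Lemma strictly_increasing_comp s t :
  strictly_increasing s -> strictly_increasing t -> strictly_increasing (fun k => s (t k)).
Proof. intros Hs Ht k. now apply strictly_increasing_lt. Qed.

Lemma frequently_subseq (Q : nat -> nat -> Prop) :
  (forall k N, exists n, (N <= n)%nat /\ Q k n) ->
  exists s, strictly_increasing s /\ forall k, Q k (s k).
Proof.
  intros H. destruct (choice (fun (kN : nat * nat) n => (snd kN <= n)%nat /\ Q (fst kN) n))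
    as [F HF]; [intros [k N]; apply H |].
  exists (fix s k := match k with O => F (O, O) | S k' => F (S k', S (s k')) end).
  split.
  - intro k. exact (proj1 (HF (S k, _))).
  - intros [| k]; apply (HF (_, _)).
Qed.

Lemma dist_ge0 (M : Metric_Space) x y : 0 <= dist M x y.
Proof. apply Rge_le, dist_pos. Qed.

Lemma dist_self (M : Metric_Space) x : dist M x x = 0.
Proof. now apply dist_refl. Qed.

Lemma ball_open M c r : is_open M (fun y => dist M c y < r).
Proof.
  intros y Hy. exists (r - dist M c y). split; [lra |].
  intros z Hz. pose proof (dist_tri M c z y). lra.
Qed.

Section Limits.
Variable M : Metric_Space.

Lemma seq_lim_subseq x p s :
  seq_lim M x p -> strictly_increasing s -> seq_lim M (fun k => x (s k)) p.
Proof.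
  intros H Hs eps He. destruct (H eps He) as [N HN]. exists N. intros k Hk.
  apply HN. pose proof (strictly_increasing_ge s Hs k). lia.
Qed.

Lemma seq_lim_ext x y p : (forall k, x k = y k) -> seq_lim M x p -> seq_lim M y p.
Proof.
  intros H Hc eps He. destruct (Hc eps He) as [N HN]. exists N. intros k Hk. rewrite <- H. auto.
Qed.

Lemma seq_lim_unique x p q : seq_lim M x p -> seq_lim M x q -> p = q.
Proof.
  intros Hp Hq. apply (dist_refl M). apply NNPP. intro Hne.
  pose proof (dist_ge0 M p q). assert (Hd : 0 < dist M p q / 3) by lra.
  destruct (Hp _ Hd) as [N1 H1], (Hq _ Hd) as [N2 H2].
  specialize (H1 (Nat.max N1 N2) ltac:(lia)). specialize (H2 (Nat.max N1 N2) ltac:(lia)).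
  pose proof (dist_tri M p q (x (Nat.max N1 N2))). rewrite (dist_sym M (x _) q) in *. lra.
Qed.

Lemma seq_lim_dm m (z : nat -> idx m -> Base M) w :
  (forall i, seq_lim M (fun k => z k i) (w i)) ->
  forall eps, 0 < eps -> exists N, forall k, (N <= k)%nat -> dm M m w (z k) < eps.
Proof.
  intros H eps He.
  destruct (idx_eventually_all m (fun i N => forall k, (N <= k)%nat -> dist M (w i) (z k i) < eps))
    as [N HN].
  - intros i N N' HNN' HP k Hk. apply HP. lia.
  - intro i. exact (H i eps He).
  - exists N. intros k Hk. apply fmax_lt; [exact He |]. intro i. now apply HN.
Qed.

Lemma continuous_seq_lim m f (z : nat -> idx m -> Base M) w :
  continuous_m M m f -> (forall i, seq_lim M (fun k => z k i) (w i)) ->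
  seq_lim M (fun k => f (z k)) (f w).
Proof.
  intros Hf Hz eps He. destruct (Hf w eps He) as [d [Hd Hfd]].
  destruct (seq_lim_dm m z w Hz d Hd) as [N HN]. exists N. intros k Hk. auto.
Qed.

Lemma seq_lim_of_near x y p :
  seq_lim M x p -> (forall k, dist M (y k) (x k) < / INR (S k)) -> seq_lim M y p.
Proof.
  intros Hx Hxy eps He. assert (He2 : 0 < eps / 2) by lra.
  destruct (Hx _ He2) as [N1 H1], (small_inv _ He2) as [N2 H2].
  exists (Nat.max N1 N2). intros k Hk.
  specialize (H1 k ltac:(lia)). specialize (H2 k ltac:(lia)). specialize (Hxy k).
  pose proof (dist_tri M p (y k) (x k)). rewrite (dist_sym M (x k) (y k)) in *. lra.
Qed.

Lemma compact_cluster_point K (x : nat -> Base M) :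
  is_compact M K -> (forall k, K (x k)) ->
  exists p, K p /\ forall r, 0 < r -> forall N, exists k, (N <= k)%nat /\ dist M p (x k) < r.
Proof.
  intros HK Hx. apply NNPP. intro Hn.
  (* otherwise every point of K has a ball eventually avoided by the sequence *)
  set (I := {p : Base M & {r : R & {N : nat | forall k, (N <= k)%nat -> r <= dist M p (x k)}}}).
  destruct (HK I (fun i y => dist M (projT1 i) y < projT1 (projT2 i))) as [l Hl].
  - intro i. apply ball_open.
  - intros y Hy. apply NNPP. intro Hn2. apply Hn. exists y. split; [exact Hy |].
    intros r Hr N. apply NNPP. intro Hn3. apply Hn2.
    assert (Hfar : forall k, (N <= k)%nat -> r <= dist M y (x k)).
    { intros k Hk. apply Rnot_lt_le. intro. apply Hn3. eauto. }
    exists (existT _ y (existT _ r (exist _ N Hfar))). simpl. rewrite dist_self. exact Hr.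
  - set (N := fold_right (fun (i : I) acc => Nat.max (proj1_sig (projT2 (projT2 i))) acc) 0%nat l).
    assert (HN : forall i, In i l -> (proj1_sig (projT2 (projT2 i)) <= N)%nat).
    { unfold N. clear. induction l as [| a l IH]; simpl; intros i Hi; [contradiction |].
      destruct Hi as [<- | Hi]; [lia | specialize (IH i Hi); lia]. }
    destruct (Hl (x N) (Hx N)) as [i [Hi Hball]]. specialize (HN i Hi). clear Hi.
    destruct i as [p [r [N' HN']]]. simpl in *. specialize (HN' N HN). lra.
Qed.

Lemma compact_seq_compact K : is_compact M K -> seq_compact M K.
Proof.
  intros HK x Hx. destruct (compact_cluster_point K x HK Hx) as [p [Kp Hp]].
  destruct (frequently_subseq (fun k n => dist M p (x n) < / INR (S k))) as [s [Hs Hsp]].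
  { intros k N. apply Hp, inv_pos. }
  exists s, p. repeat split; [exact Hs | exact Kp |].
  intros eps He. destruct (small_inv eps He) as [N HN]. exists N. intros k Hk.
  eapply Rlt_trans; [apply Hsp | now apply HN].
Qed.

Lemma seq_compact_lebesgue_number SS (I : Type) (U : I -> Base M -> Prop) :
  seq_compact M SS -> (forall i, is_open M (U i)) -> (forall x, SS x -> exists i, U i x) ->
  exists d, 0 < d /\ forall x, SS x -> exists i, forall y, dist M x y < d -> U i y.
Proof.
  intros Hseq Hopen Hcov. apply NNPP. intro Hn.
  assert (Hk : forall k, exists x, SS x /\ forall i, exists y, dist M x y < / INR (S k) /\ ~ U i y).
  { intro k. apply NNPP. intro Hn2. apply Hn. exists (/ INR (S k)). split; [apply inv_pos |].
    intros x Sx. apply NNPP. intro Hn3. apply Hn2. exists x. split; [exact Sx |]. intro i.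
    apply NNPP. intro Hn4. apply Hn3. exists i. intros y Hy. apply NNPP. intro. apply Hn4. eauto. }
  destruct (choice _ Hk) as [x Hx].
  destruct (Hseq x (fun k => proj1 (Hx k))) as [s [p [Hs [Sp Hlim]]]].
  destruct (Hcov p Sp) as [i Hi]. destruct (Hopen i p Hi) as [r [Hr Hball]].
  assert (Hr2 : 0 < r / 2) by lra.
  destruct (Hlim _ Hr2) as [N1 H1], (small_inv _ Hr2) as [N2 H2].
  set (k := Nat.max N1 N2).
  destruct (proj2 (Hx (s k)) i) as [y [Hy HnU]]. apply HnU, Hball.
  pose proof (dist_tri M p y (x (s k))). specialize (H1 k ltac:(lia)).
  pose proof (strictly_increasing_ge s Hs k). specialize (H2 (s k) ltac:(lia)). lra.
Qed.

(* Otherwise one builds a sequence in SS whose points are pairwise at distance >= d. *)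
Lemma seq_compact_totally_bounded SS d :
  seq_compact M SS -> 0 < d ->
  exists l, (forall q, In q l -> SS q) /\ forall x, SS x -> exists q, In q l /\ dist M q x < d.
Proof.
  intros Hseq Hd.
  destruct (classic (exists x0, SS x0)) as [[x0 Sx0] | Hempty].
  2: { exists nil. split; [intros q [] |]. intros x Sx. exfalso. eauto. }
  apply NNPP. intro Hn.
  assert (Hnext : forall l : list (Base M), exists x,
            (forall q, In q l -> SS q) -> SS x /\ forall q, In q l -> d <= dist M q x).
  { intro l. destruct (classic (forall q, In q l -> SS q)) as [Hl | Hl].
    - apply NNPP. intro Hn2. apply Hn. exists l. split; [exact Hl |].
      intros x Sx. apply NNPP. intro Hn3. apply Hn2. exists x. intros _. split; [exact Sx |].
      intros q Hq. apply Rnot_lt_le. intro Hlt. apply Hn3. eauto.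
    - exists x0. intro. contradiction. }
  destruct (choice _ Hnext) as [G HG].
  set (pts := fix pts k := match k with O => nil | S k' => G (pts k') :: pts k' end).
  assert (Hpts : forall k q, In q (pts k) -> SS q).
  { induction k; simpl; intros q Hq; [contradiction |].
    destruct Hq as [<- | Hq]; [apply HG; exact IHk | exact (IHk q Hq)]. }
  set (x := fun k => G (pts k)).
  assert (Hin : forall k k', (k < k')%nat -> In (x k) (pts k')).
  { intros k k' Hkk. induction Hkk; simpl; [left | right]; auto. }
  assert (Hsep : forall k k', (k < k')%nat -> d <= dist M (x k) (x k')).
  { intros k k' Hkk. apply (proj2 (HG (pts k') (Hpts k'))). now apply Hin. }
  destruct (Hseq x (fun k => proj1 (HG (pts k) (Hpts k)))) as [s [p [Hs [_ Hlim]]]].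
  destruct (Hlim (d / 2)) as [N HN]; [lra |].
  pose proof (HN N (le_n N)). pose proof (HN (S N) (Nat.le_succ_diag_r N)).
  pose proof (Hsep _ _ (Hs N)). pose proof (dist_tri M (x (s N)) (x (s (S N))) p).
  rewrite (dist_sym M (x (s N)) p) in *. lra.
Qed.

Lemma seq_compact_compact SS : seq_compact M SS -> is_compact M SS.
Proof.
  intros Hseq I U Hopen Hcov.
  destruct (seq_compact_lebesgue_number SS I U Hseq Hopen Hcov) as [d [Hd Hleb]].
  destruct (seq_compact_totally_bounded SS d Hseq Hd) as [l [Hl Hnet]].
  assert (Hsub : forall l, (forall q, In q l -> SS q) -> exists li : list I,
            forall q, In q l -> forall y, dist M q y < d -> exists i, In i li /\ U i y).
  { clear Hl Hnet l. intro l. induction l as [| a l IH]; intros Hl.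
    - exists nil. intros q [].
    - destruct IH as [li Hli]; [intros q Hq; apply Hl; now right |].
      destruct (Hleb a (Hl a (or_introl eq_refl))) as [i Hi].
      exists (i :: li). intros q [<- | Hq] y Hy.
      + exists i. split; [now left | auto].
      + destruct (Hli q Hq y Hy) as [i' [Hi' HU]]. exists i'. split; [now right | exact HU]. }
  destruct (Hsub l Hl) as [li Hli]. exists li. intros x Sx.
  destruct (Hnet x Sx) as [q [Hq Hqx]]. exact (Hli q Hq x Hqx).
Qed.

Lemma closure_seq_compact A :
  (forall x, (forall k, A (x k)) ->
     exists s p, strictly_increasing s /\ seq_lim M (fun k => x (s k)) p) ->
  seq_compact M (closure M A).
Proof.
  intros HS x Hx.
  assert (Hnear : forall k, exists y, A y /\ dist M (x k) y < / INR (S k)).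
  { intro k. apply Hx, inv_pos. }
  destruct (choice _ Hnear) as [y Hy].
  destruct (HS y (fun k => proj1 (Hy k))) as [s [p [Hs Hlim]]].
  exists s, p. split; [exact Hs | split].
  - intros eps He. destruct (Hlim eps He) as [N HN]. exists (y (s N)).
    split; [apply Hy | apply HN; lia].
  - apply seq_lim_of_near with (fun k => y (s k)); [exact Hlim |]. intro k.
    eapply Rlt_le_trans; [apply Hy |].
    apply Rinv_le_contravar; [apply lt_0_INR; lia |].
    apply le_INR. pose proof (strictly_increasing_ge s Hs k). lia.
Qed.

Lemma compact_prod_seq m (K : idx m -> Base M -> Prop) (z : nat -> idx m -> Base M) :
  (forall i, seq_compact M (K i)) -> (forall k i, K i (z k i)) ->
  exists s w, strictly_increasing s /\ forall i, seq_lim M (fun k => z (s k) i) (w i).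
Proof.
  intros HK Hz.
  assert (Hj : forall j, exists s w, strictly_increasing s /\
            forall i, (proj1_sig i < j)%nat -> seq_lim M (fun k => z (s k) i) (w i)).
  { induction j as [| j [s [w [Hs Hw]]]].
    - exists (fun k => k), (z 0%nat). split; [intro k; lia | intros i Hi; lia].
    - destruct (Compare_dec.lt_dec j m) as [Hjm | Hjm].
      + set (i0 := exist (fun i => (i < m)%nat) j Hjm).
        destruct (HK i0 (fun k => z (s k) i0)) as [t [p [Ht [_ Hp]]]]; [intro k; apply Hz |].
        exists (fun k => s (t k)), (fun i => if Nat.eq_dec (proj1_sig i) j then p else w i).
        split; [now apply strictly_increasing_comp |].
        intros i Hi. destruct (Nat.eq_dec (proj1_sig i) j) as [E | E].
        * now rewrite (idx_eq _ i i0 E).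
        * apply (seq_lim_subseq (fun k => z (s k) i)); [apply Hw; lia | exact Ht].
      + exists s, w. split; [exact Hs |]. intros i Hi. apply Hw. destruct i; simpl in *; lia. }
  destruct (Hj m) as [s [w [Hs Hw]]]. exists s, w. split; [exact Hs |].
  intro i. apply Hw. now destruct i.
Qed.
End Limits.

(** * Fuzzy sets *)

Section Levels.
Variable M : Metric_Space.

Lemma level_pos_iff (w : Base M -> R) a x : 0 < a -> (level M w a x <-> a <= w x).
Proof. intros Ha. unfold level. destruct (Rlt_dec 0 a); [tauto | lra]. Qed.

Lemma level0_eq (w : Base M -> R) x : level M w 0 x = closure M (fun y => 0 < w y) x.
Proof. unfold level. destruct (Rlt_dec 0 0); [lra | reflexivity]. Qed.

Lemma level0_of_pos (w : Base M -> R) x : 0 < w x -> level M w 0 x.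
Proof. intros H. rewrite level0_eq. intros eps He. exists x. now rewrite dist_self. Qed.

Lemma level_in_level0 (w : Base M -> R) a x : 0 <= a -> level M w a x -> level M w 0 x.
Proof.
  intros [Ha | <-] H; [| exact H].
  apply level0_of_pos. apply (level_pos_iff w a x Ha) in H. lra.
Qed.

Lemma level_nonempty (w : Base M -> R) a : Fstar M w -> 0 <= a <= 1 -> exists x, level M w a x.
Proof.
  intros [_ [[x Hx] _]] [[Ha | <-] Ha1]; exists x.
  - apply level_pos_iff; lra.
  - apply level0_of_pos. lra.
Qed.
End Levels.

Section Zadeh.
Variables Z Y : Type.
Variable T : Z -> Y.
Variable f : Z -> R.
Hypothesis f_bounded : forall z, 0 <= f z <= 1.

Lemma zadeh_ge z : f z <= zadeh T f (T z).
Proof.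
  unfold zadeh. destruct (excluded_middle_informative _) as [_ | H]; [| exfalso; eauto].
  apply Rsup_upper; [exists 1; intros r [z' [_ ->]]; apply f_bounded | eauto].
Qed.

Lemma zadeh_range y : 0 <= zadeh T f y <= 1.
Proof.
  unfold zadeh. destruct (excluded_middle_informative _) as [[z Hz] | _]; [split | lra].
  - apply Rle_trans with (f z); [apply f_bounded |].
    apply Rsup_upper; [exists 1; intros r [z' [_ ->]]; apply f_bounded | eauto].
  - apply Rsup_least; [eauto | intros r [z' [_ ->]]; apply f_bounded].
Qed.

Lemma zadeh_approx y eps :
  0 < zadeh T f y -> 0 < eps -> exists z, T z = y /\ zadeh T f y - eps < f z.
Proof.
  intros Hpos He. unfold zadeh in *.
  destruct (excluded_middle_informative _) as [[z0 Hz0] | _]; [| lra].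
  destruct (Rsup_approx (fun r => exists z, T z = y /\ r = f z) eps)
    as [r [[z [Hz ->]] Hr]]; eauto.
  exists 1. intros r [z [_ ->]]. apply f_bounded.
Qed.
End Zadeh.

Lemma fprod_range {X : Type} m (u : idx m -> X -> R) z :
  (forall i, fuzzy (u i)) -> 0 <= fprod m u z <= 1.
Proof. intros Hu. split; [apply fmin_ge; [lra | intro i; apply Hu] | apply fmin_le1]. Qed.

Lemma fprod_le {X : Type} m (u : idx m -> X -> R) z i : fprod m u z <= u i (z i).
Proof. exact (fmin_lb m (fun i => u i (z i)) i). Qed.

Lemma fprod_range_Fstar M m (u : idx m -> Base M -> R) :
  (forall i, Fstar M (u i)) -> forall z, 0 <= fprod m u z <= 1.
Proof. intros Hu z. apply fprod_range. intro i. apply Hu. Qed.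

Lemma fprod_usc M m (u : idx m -> Base M -> R) :
  (forall i, usc M (u i)) -> forall z eps, 0 < eps ->
  exists d, 0 < d /\ forall z', dm M m z z' < d -> fprod m u z' < fprod m u z + eps.
Proof.
  intros Hu z eps He.
  destruct (idx_radius_all m (fun i d => forall y, dist M (z i) y < d -> u i y < u i (z i) + eps) 0)
    as [d [Hd Hball]].
  - intros i s s' Hs HP y Hy. apply HP. lra.
  - intro i. destruct (Hu i (z i) eps He) as [d [Hd HP]]. eauto.
  - exists d. split; [exact Hd |]. intros z' Hz'. apply fmin_lt_add; [| exact He].
    intro i. apply Hball. eapply Rle_lt_trans; [| exact Hz'].
    exact (fmax_ub m (fun i => dist M (z i) (z' i)) i).
Qed.

Lemma usc_comp_mono M (r : R -> R) (h : Base M -> R) :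
  (forall x, 0 <= h x <= 1) -> usc M h ->
  (forall s t, 0 <= s <= t -> t <= 1 -> r s <= r t) ->
  (forall t, 0 <= t < 1 -> forall eps, 0 < eps -> exists delta, 0 < delta /\
      forall s, t <= s < t + delta -> s <= 1 -> Rabs (r s - r t) < eps) ->
  usc M (fun x => r (h x)).
Proof.
  intros Hh Husc Hmono Hrc x eps He. destruct (Hh x) as [Hx0 Hx1].
  destruct (Rlt_dec (h x) 1) as [Hlt | Hge].
  - destruct (Hrc (h x) (conj Hx0 Hlt) eps He) as [d1 [Hd1 Hr]].
    destruct (Husc x d1 Hd1) as [d [Hd Hud]]. exists d. split; [exact Hd |]. intros y Hy.
    specialize (Hud y Hy). destruct (Hh y) as [Hy0 Hy1].
    destruct (Rle_dec (h x) (h y)) as [Hxy | Hxy].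
    + specialize (Hr (h y) (conj Hxy Hud) Hy1). apply Rabs_def2 in Hr. lra.
    + assert (r (h y) <= r (h x)) by (apply Hmono; lra). lra.
  - exists 1. split; [lra |]. intros y _. destruct (Hh y).
    assert (r (h y) <= r (h x)) by (apply Hmono; lra). lra.
Qed.

Lemma usc_fmax M n (h : idx n -> Base M -> R) :
  (forall j, usc M (h j)) -> usc M (fun x => fmax n (fun j => h j x)).
Proof.
  intros Hh x eps He.
  destruct (idx_radius_all n (fun j d => forall y, dist M x y < d -> h j y < h j x + eps) 0)
    as [d [Hd Hball]].
  - intros j s s' Hs HP y Hy. apply HP. lra.
  - intro j. destruct (Hh j x eps He) as [d [Hd HP]]. eauto.
  - exists d. split; [exact Hd |]. intros y Hy.
    apply fmax_lt; [pose proof (fmax_ge0 n (fun j => h j x)); lra |].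
    intro j. pose proof (fmax_ub n (fun j => h j x) j). specialize (Hball j y Hy). simpl in *. lra.
Qed.

Section Attained.
Variable M : Metric_Space.
Variable m : nat.
Variable u : idx m -> Base M -> R.
Hypothesis Hu : forall i, Fstar M (u i).
Variable ph : (idx m -> Base M) -> Base M.
Hypothesis Hph : continuous_m M m ph.

Let f := fprod m u.

(* The supports [u_i]^0 are compact and f is usc: a subsequence of z converges to some w,
   and f(w) is at least the limit value c. *)
Lemma fprod_limit_witness (z : nat -> idx m -> Base M) (y : nat -> Base M) x c :
  (forall k, 0 < f (z k)) -> (forall k, ph (z k) = y k) -> seq_lim M y x ->
  (forall eps, 0 < eps -> exists N, forall k, (N <= k)%nat -> c - eps < f (z k)) ->
  exists w, ph w = x /\ c <= f w.
Proof.
  intros Hpos Hy Hlim Hc.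
  destruct (compact_prod_seq M m (fun i => level M (u i) 0) z) as [s [w [Hs Hw]]].
  - intro i. apply compact_seq_compact, Hu.
  - intros k i. apply level0_of_pos. eapply Rlt_le_trans; [apply Hpos | apply fprod_le].
  - exists w. split.
    + apply (seq_lim_unique M (fun k => y (s k))); [| now apply seq_lim_subseq].
      apply (seq_lim_ext M (fun k => ph (z (s k)))); [intro; apply Hy |].
      now apply continuous_seq_lim.
    + apply Rnot_lt_le. intro Hlt. set (e := (c - f w) / 3). assert (He : 0 < e) by (unfold e; lra).
      destruct (fprod_usc M m u (fun i => proj1 (proj2 (proj2 (Hu i)))) w e He) as [d [Hd Hfd]].
      destruct (seq_lim_dm M m (fun k => z (s k)) w Hw d Hd) as [N1 H1].
      destruct (Hc e He) as [N2 H2].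
      set (k := Nat.max N1 N2). specialize (Hfd _ (H1 k ltac:(lia))).
      pose proof (strictly_increasing_ge s Hs k). specialize (H2 (s k) ltac:(lia)).
      fold f in Hfd. unfold e in *. lra.
Qed.

Lemma zadeh_attained x : 0 < zadeh ph f x -> exists w, ph w = x /\ zadeh ph f x <= f w.
Proof.
  intros Hp. set (g := zadeh ph f x) in *.
  assert (Hk : forall k, exists z, ph z = x /\ g - Rmin (g / 2) (/ INR (S k)) < f z).
  { intro k. apply zadeh_approx; [exact (fprod_range_Fstar M m u Hu) | exact Hp |].
    apply Rmin_glb_lt; [lra | apply inv_pos]. }
  destruct (choice _ Hk) as [z Hz].
  apply (fprod_limit_witness z (fun _ => x)).
  - intro k. destruct (Hz k) as [_ H]. pose proof (Rmin_l (g / 2) (/ INR (S k))). lra.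
  - intro k. apply Hz.
  - intros e He. exists 0%nat. intros. now rewrite dist_self.
  - intros e He. destruct (small_inv e He) as [N HN]. exists N. intros k HNk.
    destruct (Hz k) as [_ H]. pose proof (Rmin_r (g / 2) (/ INR (S k))). specialize (HN k HNk). lra.
Qed.

Lemma zadeh_usc : usc M (zadeh ph f).
Proof.
  intros x eps He. set (g := zadeh ph f).
  assert (Hg : forall y, 0 <= g y <= 1) by (intro; apply zadeh_range, fprod_range_Fstar, Hu).
  apply NNPP. intro Hn.
  assert (Hk : forall k, exists y, dist M x y < / INR (S k) /\ g x + eps <= g y).
  { intro k. apply NNPP. intro Hn2. apply Hn. exists (/ INR (S k)). split; [apply inv_pos |].
    intros y Hy. apply Rnot_le_lt. intro. apply Hn2. eauto. }
  destruct (choice _ Hk) as [y Hy].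
  assert (Hat : forall k, exists z, ph z = y k /\ g (y k) <= f z).
  { intro k. apply zadeh_attained. specialize (Hg x). destruct (Hy k). unfold g in *. lra. }
  destruct (choice _ Hat) as [z Hz].
  destruct (fprod_limit_witness z y x (g x + eps)) as [w [Hw Hfw]].
  - intro k. destruct (Hz k), (Hy k). specialize (Hg x). lra.
  - intro k. apply Hz.
  - intros e He'. destruct (small_inv e He') as [N HN]. exists N. intros k HNk.
    destruct (Hy k). specialize (HN k HNk). lra.
  - intros e He'. exists 0%nat. intros k _. destruct (Hz k), (Hy k). lra.
  - assert (f w <= g x) by (rewrite <- Hw; apply zadeh_ge, fprod_range_Fstar, Hu). lra.
Qed.
End Attained.

(** * The GIFZS operator *)

Section Operator.
Variable M : Metric_Space.
Variables m n : nat.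
Variable phi : idx n -> (idx m -> Base M) -> Base M.
Variable rho : idx n -> R -> R.
Hypothesis Hadm : admissible n rho.
Hypothesis Hcont : forall j, continuous_m M m (phi j).

Lemma rho_range j t : 0 <= t <= 1 -> 0 <= rho j t <= 1.
Proof. apply (proj1 Hadm). Qed.

Lemma rho_mono j s t : 0 <= s <= t -> t <= 1 -> rho j s <= rho j t.
Proof. apply (proj1 (proj2 Hadm)). Qed.

Lemma rho_0 j : rho j 0 = 0.
Proof. apply (proj1 (proj2 (proj2 (proj2 Hadm)))). Qed.

Variable u : idx m -> Base M -> R.
Hypothesis Hu : forall i, Fstar M (u i).

Lemma Zop_range x : 0 <= Zop M m n phi rho u x <= 1.
Proof.
  split; [apply fmax_ge0 |]. apply fmax_le; [lra |]. intro j.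
  apply rho_range, zadeh_range, fprod_range_Fstar, Hu.
Qed.

Lemma Zop_normal : exists x, Zop M m n phi rho u x = 1.
Proof.
  destruct (choice (fun i x => u i x = 1)) as [xs Hxs]; [intro i; apply Hu |].
  destruct Hadm as [_ [_ [_ [_ [j0 Hj0]]]]].
  exists (phi j0 xs).
  assert (Hf : fprod m u xs = 1).
  { apply Rle_antisym; [apply fmin_le1 |]. apply fmin_ge; [lra |]. intro i. rewrite Hxs. lra. }
  assert (Hz : zadeh (phi j0) (fprod m u) (phi j0 xs) = 1).
  { apply Rle_antisym; [apply zadeh_range, fprod_range_Fstar, Hu |].
    rewrite <- Hf at 1. apply zadeh_ge, fprod_range_Fstar, Hu. }
  apply Rle_antisym; [apply Zop_range |].
  rewrite <- Hj0, <- Hz.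
  exact (fmax_ub n (fun j => rho j (zadeh (phi j) (fprod m u) (phi j0 xs))) j0).
Qed.

Lemma Zop_usc : usc M (Zop M m n phi rho u).
Proof.
  apply (usc_fmax M n (fun j x => rho j (zadeh (phi j) (fprod m u) x))). intro j.
  apply usc_comp_mono.
  - intro. apply zadeh_range, fprod_range_Fstar, Hu.
  - now apply zadeh_usc.
  - intros. now apply rho_mono.
  - apply (proj1 (proj2 (proj2 Hadm))).
Qed.

Lemma Zop_pos_witness x : 0 < Zop M m n phi rho u x ->
  exists j w, phi j w = x /\ 0 < fprod m u w /\ Zop M m n phi rho u x <= rho j (fprod m u w).
Proof.
  intros Hp. destruct (fmax_attained n _ _ Hp (Rle_refl _)) as [j Hj].
  set (g := zadeh (phi j) (fprod m u) x) in *.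
  assert (Hg : 0 <= g <= 1) by apply zadeh_range, fprod_range_Fstar, Hu.
  assert (Hgp : 0 < g).
  { destruct (proj1 Hg) as [H | H]; [exact H |].
    rewrite <- H, rho_0 in Hj. lra. }
  destruct (zadeh_attained M m u Hu (phi j) (Hcont j) x Hgp) as [w [Hw Hgw]].
  fold g in Hgw. exists j, w. split; [exact Hw | split; [lra |]].
  eapply Rle_trans; [exact Hj |]. apply rho_mono; [lra | apply fprod_range_Fstar, Hu].
Qed.

(* A sequence in the positivity set of Z_S comes, along a subsequence, from a single
   phi_j applied to points of the compact product of supports. *)
Lemma Zop_pos_seq_cluster (x : nat -> Base M) :
  (forall k, 0 < Zop M m n phi rho u (x k)) ->
  exists s p, strictly_increasing s /\ seq_lim M (fun k => x (s k)) p.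
Proof.
  intros Hx.
  assert (HJ : forall k, exists jw : idx n * (idx m -> Base M),
             phi (fst jw) (snd jw) = x k /\ 0 < fprod m u (snd jw)).
  { intro k. destruct (Zop_pos_witness (x k) (Hx k)) as [j [w [H1 [H2 _]]]]. now exists (j, w). }
  destruct (choice _ HJ) as [jw Hjw].
  destruct (idx_pigeonhole n (fun k => fst (jw k))) as [j Hj].
  destruct (frequently_subseq (fun _ k => fst (jw k) = j)) as [t [Ht Htj]].
  { intros _ N. destruct (Hj N) as [k [Hk E]]. eauto. }
  destruct (compact_prod_seq M m (fun i => level M (u i) 0) (fun k => snd (jw (t k))))
    as [s [w [Hs Hw]]].
  - intro i. apply compact_seq_compact, Hu.
  - intros k i. apply level0_of_pos. eapply Rlt_le_trans; [apply Hjw | apply fprod_le].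
  - exists (fun k => t (s k)), (phi j w). split; [now apply strictly_increasing_comp |].
    apply (seq_lim_ext M (fun k => phi j (snd (jw (t (s k)))))).
    + intro k. rewrite <- (Htj (s k)). apply Hjw.
    + now apply continuous_seq_lim.
Qed.

Lemma Zop_support_compact : is_compact M (level M (Zop M m n phi rho u) 0).
Proof.
  apply seq_compact_compact. intros x Hx.
  destruct (closure_seq_compact M (fun y => 0 < Zop M m n phi rho u y) Zop_pos_seq_cluster x) as [s [p [Hs [Hp Hlim]]]].
  { intro k. rewrite <- level0_eq. apply Hx. }
  exists s, p. rewrite level0_eq. auto.
Qed.

Lemma Zop_Fstar : Fstar M (Zop M m n phi rho u).
Proof.
  split; [intro x; apply Zop_range |].
  split; [apply Zop_normal | split; [apply Zop_usc | apply Zop_support_compact]].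
Qed.
End Operator.

(** * Hausdorff distance and d_infinity *)

Section Hausdorff.
Variable M : Metric_Space.

Lemma dist_to_le a (B : Base M -> Prop) b : B b -> dist_to M a B <= dist M a b.
Proof.
  intros Hb. apply Rinf_lower with 0; [intros y [b' [_ ->]]; apply dist_ge0 | eauto].
Qed.

Lemma dist_to_approx a (B : Base M -> Prop) eps : (exists b, B b) -> 0 < eps ->
  exists b, B b /\ dist M a b < dist_to M a B + eps.
Proof.
  intros [b0 Hb0] He.
  destruct (Rinf_approx (fun r => exists b, B b /\ r = dist M a b) 0 eps)
    as [r [[b [Hb ->]] Hr]]; eauto.
  intros y [b' [_ ->]]. apply dist_ge0.
Qed.

Lemma hausdorff_le (A B : Base M -> Prop) C : (exists a, A a) -> (exists b, B b) ->
  (forall a, A a -> dist_to M a B <= C) -> (forall b, B b -> dist_to M b A <= C) ->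
  hausdorff M A B <= C.
Proof.
  intros [a0 Ha0] [b0 Hb0] HA HB. apply Rmax_lub.
  - apply Rsup_least; [eauto | intros r [a [Ha ->]]; auto].
  - apply Rsup_least; [eauto | intros r [b [Hb ->]]; auto].
Qed.

Lemma hausdorff_ge_l (A B : Base M -> Prop) C a :
  (forall a, A a -> dist_to M a B <= C) -> A a -> dist_to M a B <= hausdorff M A B.
Proof.
  intros H Ha. eapply Rle_trans; [| apply Rmax_l].
  apply Rsup_upper; [exists C; intros r [a' [Ha' ->]]; auto | eauto].
Qed.

Lemma hausdorff_ge_r (A B : Base M -> Prop) C b :
  (forall b, B b -> dist_to M b A <= C) -> B b -> dist_to M b A <= hausdorff M A B.
Proof.
  intros H Hb. eapply Rle_trans; [| apply Rmax_r].
  apply Rsup_upper; [exists C; intros r [b' [Hb' ->]]; auto | eauto].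
Qed.

Lemma compact_bounded K c : is_compact M K -> exists r, forall x, K x -> dist M c x <= r.
Proof.
  intros HK. destruct (HK nat (fun k y => dist M c y < INR k)) as [l Hl].
  - intro k. apply ball_open.
  - intros x _. destruct (INR_unbounded (dist M c x)) as [k Hk]. exists k. lra.
  - exists (fold_right (fun k acc => Rmax (INR k) acc) 0 l). intros x Hx.
    destruct (Hl x Hx) as [k [Hk Hd]]. left. eapply Rlt_le_trans; [exact Hd |].
    clear Hl Hd. induction l as [| k' l IH]; simpl in *; [contradiction |].
    destruct Hk as [-> | Hk]; [apply Rmax_l | eapply Rle_trans; [apply IH, Hk | apply Rmax_r]].
Qed.

Lemma Fstar_levels_bounded (u v : Base M -> R) : Fstar M u -> Fstar M v ->
  exists C, forall a, 0 <= a -> forall x y, level M u a x -> level M v a y -> dist M x y <= C.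
Proof.
  intros [_ [[x1 _] [_ Ku]]] [_ [[y1 _] [_ Kv]]].
  destruct (compact_bounded _ x1 Ku) as [ru Hru], (compact_bounded _ y1 Kv) as [rv Hrv].
  exists (ru + dist M x1 y1 + rv). intros a Ha x y Hx Hy.
  specialize (Hru x (level_in_level0 M u a x Ha Hx)).
  specialize (Hrv y (level_in_level0 M v a y Ha Hy)).
  rewrite dist_sym in Hru. pose proof (dist_tri M x y x1). pose proof (dist_tri M x1 y y1). lra.
Qed.

Lemma dist_to_level_le_d_inf (u v : Base M -> R) a : Fstar M u -> Fstar M v -> 0 <= a <= 1 ->
  (forall x, level M u a x -> dist_to M x (level M v a) <= d_inf M u v) /\
  (forall y, level M v a y -> dist_to M y (level M u a) <= d_inf M u v).
Proof.
  intros Hu Hv Ha. destruct (Fstar_levels_bounded u v Hu Hv) as [C HC].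
  assert (Bu : forall a', 0 <= a' <= 1 -> forall x, level M u a' x -> dist_to M x (level M v a') <= C).
  { intros a' Ha' x Hx. destruct (level_nonempty M v a' Hv Ha') as [y Hy].
    eapply Rle_trans; [apply (dist_to_le _ _ y Hy) | apply (HC a'); auto; lra]. }
  assert (Bv : forall a', 0 <= a' <= 1 -> forall y, level M v a' y -> dist_to M y (level M u a') <= C).
  { intros a' Ha' y Hy. destruct (level_nonempty M u a' Hu Ha') as [x Hx].
    eapply Rle_trans; [apply (dist_to_le _ _ x Hx) | rewrite dist_sym; apply (HC a'); auto; lra]. }
  assert (Hh : hausdorff M (level M u a) (level M v a) <= d_inf M u v).
  { apply Rsup_upper; [| eauto]. exists C. intros r [a' [Ha' ->]].
    apply hausdorff_le; [apply level_nonempty; auto .. | apply Bu; auto | apply Bv; auto]. }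
  split.
  - intros x Hx. eapply Rle_trans; [| exact Hh]. apply hausdorff_ge_l with C; auto.
  - intros y Hy. eapply Rle_trans; [| exact Hh]. apply hausdorff_ge_r with C; auto.
Qed.

(* Levels of a usc, compactly supported fuzzy set are compact, so dist_to is attained. *)
Lemma level_point_within (v : Base M -> R) s z D : Fstar M v -> 0 < s -> (exists w, s <= v w) ->
  dist_to M z (level M v s) <= D -> exists w, s <= v w /\ dist M z w <= D.
Proof.
  intros Hv Hs [w0 Hw0] HD.
  assert (Hk : forall k, exists b, level M v s b /\
                 dist M z b < dist_to M z (level M v s) + / INR (S k)).
  { intro k. apply dist_to_approx; [exists w0; now apply level_pos_iff | apply inv_pos]. }
  destruct (choice _ Hk) as [b Hb].
  destruct (compact_seq_compact M (level M v 0) (proj2 (proj2 (proj2 Hv))) b)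
    as [sg [p [Hsg [_ Hlim]]]].
  { intro k. apply level_in_level0 with s; [lra | apply Hb]. }
  exists p. split.
  - apply Rnot_lt_le. intro Hlt. destruct Hv as [_ [_ [Husc _]]].
    destruct (Husc p (s - v p)) as [d [Hd Hud]]; [lra |].
    destruct (Hlim d Hd) as [N HN]. specialize (Hud _ (HN N (le_n N))).
    destruct (Hb (sg N)) as [Hl _]. apply level_pos_iff in Hl; [lra | exact Hs].
  - apply Rnot_lt_le. intro Hlt. set (e := (dist M z p - dist_to M z (level M v s)) / 3).
    assert (He : 0 < e) by (unfold e; lra).
    destruct (Hlim e He) as [N1 H1], (small_inv e He) as [N2 H2].
    set (k := Nat.max N1 N2). specialize (H1 k ltac:(lia)).
    pose proof (strictly_increasing_ge sg Hsg k). specialize (H2 (sg k) ltac:(lia)).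
    destruct (Hb (sg k)) as [_ Hd]. pose proof (dist_tri M z p (b (sg k))).
    rewrite (dist_sym M (b (sg k)) p) in *. unfold e in *. lra.
Qed.

Lemma level_transfer (u v : Base M -> R) s z : Fstar M u -> Fstar M v -> 0 < s <= 1 ->
  (s <= u z -> exists w, s <= v w /\ dist M z w <= d_inf M u v) /\
  (s <= v z -> exists w, s <= u w /\ dist M z w <= d_inf M u v).
Proof.
  intros Hu Hv Hs.
  destruct (dist_to_level_le_d_inf u v s Hu Hv ltac:(lra)) as [Huv Hvu].
  assert (Hne : forall w, Fstar M w -> exists x, s <= w x).
  { intros w Hw. destruct (level_nonempty M w s Hw ltac:(lra)) as [x Hx].
    exists x. now apply level_pos_iff in Hx; [| lra]. }
  split; intro Hz; apply level_point_within; auto; try lra.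
  - apply Huv. apply level_pos_iff; [lra | exact Hz].
  - apply Hvu. apply level_pos_iff; [lra | exact Hz].
Qed.

Lemma dist_to_level_le (U V : Base M -> R) C a x :
  (forall a, 0 < a -> forall x, a <= U x -> exists y, a <= V y /\ dist M x y <= C) ->
  0 <= a -> level M U a x -> dist_to M x (level M V a) <= C.
Proof.
  intros HUV [Ha | <-] Hx.
  - apply level_pos_iff in Hx; [| exact Ha]. destruct (HUV a Ha x Hx) as [y [Hy Hd]].
    eapply Rle_trans; [| exact Hd]. apply dist_to_le. now apply level_pos_iff.
  - apply Rnot_lt_le. intro Hlt. set (e := (dist_to M x (level M V 0) - C) / 2).
    assert (He : 0 < e) by (unfold e; lra).
    rewrite level0_eq in Hx. destruct (Hx e He) as [x' [Hx' Hd]].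
    destruct (HUV (U x') Hx' x' (Rle_refl _)) as [y [Hy Hdy]].
    pose proof (dist_to_le x _ y (level0_of_pos M V y ltac:(lra))).
    pose proof (dist_tri M x y x'). unfold e in *. lra.
Qed.

Lemma d_inf_le (U V : Base M -> R) C : Fstar M U -> Fstar M V ->
  (forall a, 0 < a -> forall x, a <= U x -> exists y, a <= V y /\ dist M x y <= C) ->
  (forall a, 0 < a -> forall x, a <= V x -> exists y, a <= U y /\ dist M x y <= C) ->
  d_inf M U V <= C.
Proof.
  intros HU HV HUV HVU. apply Rsup_least.
  - exists (hausdorff M (level M U 0) (level M V 0)). exists 0. split; [lra | reflexivity].
  - intros r [a [Ha ->]].
    apply hausdorff_le; [apply level_nonempty; auto .. | |];
      intros; eapply dist_to_level_le; eauto; lra.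
Qed.
End Hausdorff.

(** * Contractivity of Z_S *)

Section Contraction.
Variable M : Metric_Space.
Variables m n : nat.
Variable phi : idx n -> (idx m -> Base M) -> Base M.
Variable rho : idx n -> R -> R.
Hypothesis Hadm : admissible n rho.
Hypothesis Hcont : forall j, continuous_m M m (phi j).
Variable psi : idx n -> R -> R.
Hypothesis psi_mono : forall j s t, 0 <= s <= t -> psi j s <= psi j t.
Hypothesis phi_psi : forall j x y, dist M (phi j x) (phi j y) <= psi j (dm M m x y).

Lemma Zop_level_transfer (u v : idx m -> Base M -> R) (D : idx m -> R) :
  (forall i, Fstar M (u i)) -> (forall i, Fstar M (v i)) ->
  (forall i s z, 0 < s <= 1 -> s <= u i z -> exists w, s <= v i w /\ dist M z w <= D i) ->
  forall a, 0 < a -> forall x, a <= Zop M m n phi rho u x ->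
  exists y, a <= Zop M m n phi rho v y /\ dist M x y <= fmax n (fun j => psi j (fmax m D)).
Proof.
  intros Hu Hv Huv a Ha x Hx.
  destruct (Zop_pos_witness M m n phi rho Hadm Hcont u Hu x ltac:(lra))
    as [j [w [Hw [Hspos Hrho]]]].
  set (s := fprod m u w) in *.
  assert (Hs1 : s <= 1) by apply fmin_le1.
  destruct (choice (fun i w' => s <= v i w' /\ dist M (w i) w' <= D i)) as [w' Hw'].
  { intro i. apply Huv; [lra | apply fprod_le]. }
  exists (phi j w'). split.
  - eapply Rle_trans; [exact (Rle_trans _ _ _ Hx Hrho) |].
    eapply Rle_trans; [| exact (fmax_ub n (fun j0 => rho j0 (zadeh (phi j0) (fprod m v) (phi j w'))) j)].
    apply (rho_mono n rho Hadm); [| apply zadeh_range, fprod_range_Fstar, Hv].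
    split; [lra |]. eapply Rle_trans; [| apply zadeh_ge, fprod_range_Fstar, Hv].
    apply fmin_ge; [exact Hs1 | intro i; apply Hw'].
  - rewrite <- Hw. eapply Rle_trans; [apply phi_psi |].
    eapply Rle_trans; [| exact (fmax_ub n (fun j0 => psi j0 (fmax m D)) j)].
    apply psi_mono. split; [apply fmax_ge0 |]. apply fmax_mono. intro i. apply Hw'.
Qed.

Lemma Zop_contraction (u v : idx m -> Base M -> R) :
  (forall i, Fstar M (u i)) -> (forall i, Fstar M (v i)) ->
  d_inf M (Zop M m n phi rho u) (Zop M m n phi rho v)
    <= fmax n (fun j => psi j (d_inf_m M m u v)).
Proof.
  intros Hu Hv. apply d_inf_le; [apply Zop_Fstar; auto .. | |].
  - apply (Zop_level_transfer u v (fun i => d_inf M (u i) (v i))); auto.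
    intros i s z Hs. exact (proj1 (level_transfer M (u i) (v i) s z (Hu i) (Hv i) Hs)).
  - apply (Zop_level_transfer v u (fun i => d_inf M (u i) (v i))); auto.
    intros i s z Hs. exact (proj2 (level_transfer M (u i) (v i) s z (Hu i) (Hv i) Hs)).
Qed.
End Contraction.

Theorem mainTheorem11 (M : Metric_Space) (m n : nat)
  (phi : idx n -> (idx m -> Base M) -> Base M) (rho : idx n -> R -> R)
  (varphi : idx n -> R -> R) :
  admissible n rho ->
  (forall j, continuous_m M m (phi j)) ->
  (forall j, gen_matkowski (dm M m) (dist M) (phi j) (varphi j)) ->
  (forall u : idx m -> Base M -> R,
     (forall i, Fstar M (u i)) -> Fstar M (Zop M m n phi rho u)) /\
  matkowski_witness (fun t => fmax n (fun j => varphi j t)) /\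
  (forall u v : idx m -> Base M -> R,
     (forall i, Fstar M (u i)) -> (forall i, Fstar M (v i)) ->
     d_inf M (Zop M m n phi rho u) (Zop M m n phi rho v)
       <= fmax n (fun j => varphi j (d_inf_m M m u v))) /\
  (forall L : idx n -> R,
     (forall j, 0 <= L j < 1 /\
        forall x y, dist M (phi j x) (phi j y) <= L j * dm M m x y) ->
     forall u v : idx m -> Base M -> R,
       (forall i, Fstar M (u i)) -> (forall i, Fstar M (v i)) ->
       d_inf M (Zop M m n phi rho u) (Zop M m n phi rho v)
         <= fmax n L * d_inf_m M m u v).
Proof.
  intros Hadm Hcont Hgm. split; [| split; [| split]].
  - intros u Hu. now apply Zop_Fstar.
  - apply witness_fmax. intro j. apply Hgm.
  - apply Zop_contraction; auto; intros j; apply Hgm.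
  - intros L HL u v Hu Hv. rewrite <- fmax_mult_r by apply fmax_ge0.
    apply (Zop_contraction M m n phi rho Hadm Hcont (fun j t => L j * t)); auto.
    + intros j s t Hst. apply Rmult_le_compat_l; [apply HL | apply Hst].
    + intro j. apply HL.
Qed.
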